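(* Let $R$ be an $\mathbb{N}$-graded domain and let $F_1,\ldots,F_n$ be a regular sequence of homogeneous elements of $R$ that generate a prime ideal $P$. Let $f_1,\ldots,f_n \in R$ be elements whose leading forms are $F_1,\ldots,F_n$ respectively. Then $f_1,\ldots,f_n$ generate a prime ideal of $R$.
   Context: The leading form of a nonzero element of an $\mathbb{N}$-graded ring is its nonzero homogeneous component of highest degree. *)

From HB Require Import structures.
From mathcomp Require Import all_boot all_order all_algebra.
Set Implicit Arguments. Unset Strict Implicit. Unset Printing Implicit Defensive.
Import GRing.Theory.
Local Open Scope ring_scope.

Definition is_Ngrading (R : comNzRingType) (hom : nat -> pred R) : Prop :=
  [/\ (forall d, 0 \in hom d),
      (forall d x y, x \in hom d -> y \in hom d -> x - y \in hom d),
      (forall i j x y, x \in hom i -> y \in hom j -> x * y \in hom (i + j)%N),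
      (forall x : R, exists (N : nat) (f : nat -> R),
          (forall d, f d \in hom d) /\ x = \sum_(d < N) f d)
    &
      (forall (N : nat) (f : nat -> R),
          (forall d, f d \in hom d) -> \sum_(d < N) f d = 0 ->
          forall d, (d < N)%N -> f d = 0)].

Definition homogeneous (R : comNzRingType) (hom : nat -> pred R) (x : R) : Prop :=
  exists d, x \in hom d.

Definition leading_form (R : comNzRingType) (hom : nat -> pred R) (x F : R) : Prop :=
  exists (d : nat) (f : nat -> R),
    [/\ (forall i, f i \in hom i), x = \sum_(i < d.+1) f i, f d != 0 & F = f d].

Definition in_ideal_upto (R : comNzRingType) (n k : nat) (F : 'I_n -> R) (x : R) : Prop :=
  exists c : 'I_n -> R, x = \sum_(j < n | (j < k)%N) c j * F j.

Definition in_ideal (R : comNzRingType) (n : nat) (F : 'I_n -> R) (x : R) : Prop :=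
  in_ideal_upto n F x.

Definition regular_sequence (R : comNzRingType) (n : nat) (F : 'I_n -> R) : Prop :=
  (forall (i : 'I_n) (a : R), in_ideal_upto i F (a * F i) -> in_ideal_upto i F a)
  /\ ~ in_ideal F 1.

Definition generates_prime_ideal (R : comNzRingType) (n : nat) (F : 'I_n -> R) : Prop :=
  ~ in_ideal F 1 /\
  (forall a b : R, in_ideal F (a * b) -> in_ideal F a \/ in_ideal F b).

From HB Require Import structures.
From mathcomp Require Import all_boot all_order all_algebra.
From mathcomp Require Import zify ring.
From Stdlib Require Import ClassicalEpsilon.
Set Implicit Arguments. Unset Strict Implicit. Unset Printing Implicit Defensive.
Import GRing.Theory.
Local Open Scope ring_scope.

(* Let e_j be the degree of F_j, so that F_j is the component of degree e_j of
   f_j and f_j has no component above it.  The heart of the proof is a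
   standard-basis property: if x lies in (f_1,...,f_k) and has degree <= D,
   then x = sum c_j f_j with deg c_j + e_j <= D.  Proceeding generator by
   generator, if the last coefficient c has deg c + e_k > D, then (top c) F_k
   is minus the top component of an element of (f_1,...,f_(k-1)) of small
   degree, hence lies in (F_1,...,F_(k-1)); regularity puts top c in that
   ideal, and subtracting a lift of it lowers deg c.  Hence the component of
   degree D of an element of (f) of degree <= D lies in (F).  Primality then
   follows by induction on deg a + deg b: if ab is in (f), the product of the
   top components of a and b lies in the prime (F), so say top a is in (F);
   subtracting from a a lift of top a in (f) lowers deg a.  Finally 1 is not in
   (f) since its component of degree 0 is 1, which is not in (F). *)

Section HomogeneousComponents.
Variables (R : comNzRingType) (hom : nat -> pred R) (Hgr : is_Ngrading hom).

Lemma hom0 d : 0 \in hom d. Proof. by case: Hgr. Qed.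

Lemma homB d x y : x \in hom d -> y \in hom d -> x - y \in hom d.
Proof. by case: Hgr => _ homB _ _ _; apply: homB. Qed.

Lemma homN d x : x \in hom d -> - x \in hom d.
Proof. by move=> hx; rewrite -sub0r homB ?hom0. Qed.

Lemma homD d x y : x \in hom d -> y \in hom d -> x + y \in hom d.
Proof. by move=> hx hy; rewrite -[y]opprK homB ?homN. Qed.

Lemma homM i j x y : x \in hom i -> y \in hom j -> x * y \in hom (i + j)%N.
Proof. by case: Hgr => _ _ homM _ _; apply: homM. Qed.

Lemma sum_widen N K (g : nat -> R) : (N <= K)%N ->
  \sum_(d < N) g d = \sum_(d < K) (if (d < N)%N then g d else 0).
Proof. by move=> leNK; rewrite (big_ord_widen K g leNK) big_mkcond. Qed.

Lemma homogeneous_decomp_uniq N M (g g' : nat -> R) :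
    (forall d, g d \in hom d) -> (forall d, g' d \in hom d) ->
    \sum_(d < N) g d = \sum_(d < M) g' d ->
  forall d, (if (d < N)%N then g d else 0) = (if (d < M)%N then g' d else 0).
Proof.
move=> hg hg' eq_sum d.
pose h i := (if (i < N)%N then g i else 0) - (if (i < M)%N then g' i else 0).
have hh i : h i \in hom i by rewrite /h; apply: homB; case: ifP; rewrite ?hom0.
have sum_h : \sum_(i < maxn N M) h i = 0.
  by rewrite sumrB -!sum_widen ?leq_maxl ?leq_maxr // eq_sum subrr.
case: (ltnP d (maxn N M)) => [ltdNM | ].
  apply/eqP; rewrite -subr_eq0; apply/eqP.
  by case: Hgr => _ _ _ _ direct; exact: direct _ h hh sum_h _ ltdNM.
by rewrite geq_max => /andP[leNd leMd]; rewrite !ifN // -leqNgt.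
Qed.

Lemma exists_homogeneous_decomp (x : R) : exists p : nat * (nat -> R),
  (forall d, p.2 d \in hom d) /\ x = \sum_(d < p.1) p.2 d.
Proof. by case: Hgr => _ _ _ decomp _; case: (decomp x) => N [g ?]; exists (N, g). Qed.

Definition hdecomp (x : R) : nat * (nat -> R) :=
  proj1_sig (constructive_indefinite_description _ (exists_homogeneous_decomp x)).

Definition hcomp (d : nat) (x : R) : R :=
  if (d < (hdecomp x).1)%N then (hdecomp x).2 d else 0.

Lemma hdecompP x :
  (forall d, (hdecomp x).2 d \in hom d) /\ x = \sum_(d < (hdecomp x).1) (hdecomp x).2 d.
Proof. by rewrite /hdecomp; case: constructive_indefinite_description. Qed.

Lemma hcomp_decomp x N (g : nat -> R) : (forall d, g d \in hom d) ->
  x = \sum_(d < N) g d -> forall d, hcomp d x = if (d < N)%N then g d else 0.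
Proof.
move=> hg ->; case: (hdecompP (\sum_(d < N) g d)) => hg' eq_sum d.
by apply: homogeneous_decomp_uniq => //; rewrite -eq_sum.
Qed.

Lemma hcomp_hom d x : hcomp d x \in hom d.
Proof. by rewrite /hcomp; case: ifP => _; [case: (hdecompP x) | exact: hom0]. Qed.

Lemma hcomp_homog e x : x \in hom e -> forall d, hcomp d x = if d == e then x else 0.
Proof.
move=> hx d.
have hg (i : nat) : (if i == e then x else 0) \in hom i by case: eqP => [->|_]; rewrite ?hom0.
have -> := hcomp_decomp hg (_ : x = \sum_(i < e.+1) (if (i : nat) == e then x else 0)).
  by case: eqP => [->|_]; rewrite ?ltnSn ?if_same.
rewrite big_ord_recr /= eqxx big1 ?add0r // => i _.
by rewrite ifN // neq_ltn ltn_ord.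
Qed.

Lemma hcomp0 d : hcomp d 0 = 0.
Proof. by rewrite (hcomp_homog (hom0 0)) if_same. Qed.

Definition deg_le (D : nat) (x : R) := forall i, (D < i)%N -> hcomp i x = 0.

(* [deg_addn_le e D x] reads "deg x + e <= D"; it forces [x = 0] when [D < e]. *)
Definition deg_addn_le (e D : nat) (x : R) := forall i, (D < i + e)%N -> hcomp i x = 0.

Lemma exists_deg_le x : exists D, deg_le D x.
Proof.
exists (hdecomp x).1 => d ltd; rewrite /hcomp ifN // -leqNgt; exact: ltnW.
Qed.

Lemma sum_hcomp x D : deg_le D x -> x = \sum_(d < D.+1) hcomp d x.
Proof.
move=> degx; have [_ {1}->] := hdecompP x.
rewrite (sum_widen (hdecomp x).2 (leq_maxl _ D.+1)).
rewrite (sum_widen (fun d => hcomp d x) (leq_maxr (hdecomp x).1 D.+1)).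
apply: eq_bigr => d _; rewrite -/(hcomp d x).
by case: (ltnP d D.+1) => // ltDd; rewrite degx.
Qed.

Lemma deg_le_mono D D' x : (D <= D')%N -> deg_le D x -> deg_le D' x.
Proof. by move=> leDD' degx i ltD'i; apply: degx; apply: leq_ltn_trans ltD'i. Qed.

Lemma hcompD d x y : hcomp d (x + y) = hcomp d x + hcomp d y.
Proof.
have [[Dx degx] [Dy degy]] := (exists_deg_le x, exists_deg_le y).
have degx' := deg_le_mono (leq_maxl Dx Dy) degx.
have degy' := deg_le_mono (leq_maxr Dx Dy) degy.
have hg i : hcomp i x + hcomp i y \in hom i by rewrite homD ?hcomp_hom.
rewrite (hcomp_decomp hg (_ : _ = \sum_(i < (maxn Dx Dy).+1) _)); last first.
  by rewrite big_split /= -!sum_hcomp.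
by case: ltnP => // ltDd; rewrite degx' ?degy' ?addr0.
Qed.

Lemma hcompN d x : hcomp d (- x) = - hcomp d x.
Proof. by apply/eqP; rewrite -addr_eq0 -hcompD addNr hcomp0. Qed.

Lemma hcompB d x y : hcomp d (x - y) = hcomp d x - hcomp d y.
Proof. by rewrite hcompD hcompN. Qed.

Lemma hcomp_sum d (I : Type) (r : seq I) (P : pred I) (g : I -> R) :
  hcomp d (\sum_(i <- r | P i) g i) = \sum_(i <- r | P i) hcomp d (g i).
Proof. exact: (big_morph (hcomp d) (hcompD d) (hcomp0 d)). Qed.

Lemma hcomp_mulr_hom e x y : y \in hom e -> forall d,
  hcomp d (x * y) = if (e <= d)%N then hcomp (d - e) x * y else 0.
Proof.
move=> hy d; have [D degx] := exists_deg_le x.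
rewrite {1}(sum_hcomp degx) mulr_suml hcomp_sum.
under eq_bigr => i _ do rewrite (hcomp_homog (homM (hcomp_hom i x) hy)).
case: leqP => [led | ltd]; last by rewrite big1 // => i _; rewrite ifN //; apply/eqP; lia.
rewrite (eq_bigr (fun i : 'I_D.+1 => if i == (d - e)%N :> nat then hcomp i x * y else 0)).
  rewrite -big_mkcond (big_ord1_eq _ (fun i => hcomp i x * y)).
  by case: ltnP => // ltDde; rewrite degx ?mul0r.
by move=> i _; congr (if _ then _ else _); apply/eqP/eqP; lia.
Qed.

Lemma hcomp_mul M x y : deg_le M y -> forall d,
  hcomp d (x * y) = \sum_(j < M.+1) (if (j <= d)%N then hcomp (d - j) x * hcomp j y else 0).
Proof.
move=> degy d; rewrite {1}(sum_hcomp degy) mulr_sumr hcomp_sum.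
by apply: eq_bigr => j _; rewrite (hcomp_mulr_hom _ (hcomp_hom _ _)).
Qed.

Lemma deg_le_mul D e x y : deg_addn_le e D x -> deg_le e y -> deg_le D (x * y).
Proof.
move=> degx degy d ltDd; rewrite (hcomp_mul _ degy) big1 // => j _.
by case: ifP => // lejd; rewrite degx ?mul0r //; have := ltn_ord j; lia.
Qed.

Lemma hcomp_mul_top D e x y : deg_addn_le e D x -> deg_le e y ->
  hcomp D (x * y) = if (e <= D)%N then hcomp (D - e) x * hcomp e y else 0.
Proof.
move=> degx degy; rewrite (hcomp_mul _ degy) big_ord_recr /= big1 ?add0r // => j _.
by case: ifP => // lejD; rewrite degx ?mul0r //; have := ltn_ord j; lia.
Qed.

Lemma deg_le_addn D e T x : (D + e <= T)%N -> deg_le D x -> deg_addn_le e T x.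
Proof. by move=> leT degx i ltT; apply: degx; lia. Qed.

Lemma deg_leB D x y : deg_le D x -> deg_le D y -> deg_le D (x - y).
Proof. by move=> degx degy i ltDi; rewrite hcompB degx ?degy ?subr0. Qed.

Lemma deg_le_sum D (I : Type) (r : seq I) (P : pred I) (g : I -> R) :
  (forall i, P i -> deg_le D (g i)) -> deg_le D (\sum_(i <- r | P i) g i).
Proof. by move=> degg d ltDd; rewrite hcomp_sum big1 // => i Pi; apply: degg. Qed.

Lemma deg_le_pred D x : deg_le D x -> hcomp D x = 0 ->
  x = 0 \/ (0 < D)%N /\ deg_le D.-1 x.
Proof.
case: D => [|D] degx topx.
  by left; rewrite (sum_hcomp degx) big_ord_recr big_ord0 /= add0r topx.
right; split => // i /= ltDi; case: (ltngtP i D.+1) => [|ltD1i|->] //; first lia.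
exact: degx.
Qed.

Lemma hcomp1 d : (0 < d)%N -> hcomp d 1 = 0.
Proof.
move=> d_gt0.
have annihilates k y : y \in hom k -> hcomp d 1 * y = 0.
  move=> hy; have := hcomp_mulr_hom 1 hy (k + d).
  rewrite mul1r leq_addr addKn (hcomp_homog hy) ifN => [<- //|].
  by rewrite -{2}[k]addn0 eqn_add2l -lt0n.
have [D deg1] := exists_deg_le 1.
rewrite -[hcomp d 1]mulr1 {2}(sum_hcomp deg1) mulr_sumr big1 // => i _.
exact: annihilates (hcomp_hom i 1).
Qed.

Lemma deg_le0_1 : deg_le 0 1. Proof. by move=> i; apply: hcomp1. Qed.

Lemma hcomp0_1 : hcomp 0 1 = 1.
Proof. by rewrite {2}(sum_hcomp deg_le0_1) big_ord_recr big_ord0 /= add0r. Qed.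

Lemma leading_formP x F : leading_form hom x F -> exists D, deg_le D x /\ F = hcomp D x.
Proof.
case=> D [g [hg eq_x _ ->]]; exists D; rewrite (hcomp_decomp hg eq_x) ltnSn.
by split=> // i ltDi; rewrite (hcomp_decomp hg eq_x) ifN // -leqNgt.
Qed.

End HomogeneousComponents.

Section IdealMembership.
Variables (R : comNzRingType) (n : nat).
Implicit Types (F : 'I_n -> R) (k : nat).

Lemma in_ideal_upto_sum k F (c : 'I_n -> R) :
  in_ideal_upto k F (\sum_(j < n | (j < k)%N) c j * F j).
Proof. by exists c. Qed.

Lemma in_ideal_uptoD k F x y :
  in_ideal_upto k F x -> in_ideal_upto k F y -> in_ideal_upto k F (x + y).
Proof.
move=> [c ->] [c' ->]; exists (fun j => c j + c' j).
by rewrite -big_split; apply: eq_bigr => j _; rewrite mulrDl.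
Qed.

Lemma in_ideal_uptoN k F x : in_ideal_upto k F x -> in_ideal_upto k F (- x).
Proof.
move=> [c ->]; exists (fun j => - c j).
by rewrite -sumrN; apply: eq_bigr => j _; rewrite mulNr.
Qed.

Lemma in_ideal_uptoB k F x y :
  in_ideal_upto k F x -> in_ideal_upto k F y -> in_ideal_upto k F (x - y).
Proof. by move=> Ix Iy; apply: in_ideal_uptoD Ix (in_ideal_uptoN Iy). Qed.

Lemma in_ideal_uptoMl k F r x : in_ideal_upto k F x -> in_ideal_upto k F (r * x).
Proof.
move=> [c ->]; exists (fun j => r * c j).
by rewrite mulr_sumr; apply: eq_bigr => j _; rewrite mulrA.
Qed.

Lemma sum_ltnS k (ltkn : (k < n)%N) (g : 'I_n -> R) :
  \sum_(j < n | (j < k.+1)%N) g j = \sum_(j < n | (j < k)%N) g j + g (Ordinal ltkn).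
Proof.
rewrite (bigD1 (Ordinal ltkn)) //= addrC; congr (_ + _); apply: eq_bigl => j.
by rewrite -(inj_eq val_inj) /=; case: (ltngtP j k) => h; lia.
Qed.

End IdealMembership.

Section LeadingForms.
Variables (R : comNzRingType) (hom : nat -> pred R) (Hgr : is_Ngrading hom).
Local Notation hcomp := (hcomp Hgr).
Local Notation deg_le := (deg_le Hgr).
Local Notation deg_addn_le := (deg_addn_le Hgr).

Variables (n : nat) (F f : 'I_n -> R) (e : 'I_n -> nat).
Hypothesis deg_f : forall j, deg_le (e j) (f j).
Hypothesis F_lead : forall j, F j = hcomp (e j) (f j).
Hypothesis regular_F :
  forall (i : 'I_n) a, in_ideal_upto i F (a * F i) -> in_ideal_upto i F a.
Hypothesis prime_F : forall a b, in_ideal F (a * b) -> in_ideal F a \/ in_ideal F b.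

Lemma F_hom j : F j \in hom (e j). Proof. by rewrite F_lead hcomp_hom. Qed.

(* The part of [g j] contributing to the component of degree [T] of [g j * F j]. *)
Definition graded_coef T (g : 'I_n -> R) j : R :=
  if (e j <= T)%N then hcomp (T - e j) (g j) else 0.

Lemma graded_coef_deg T g j : deg_addn_le (e j) T (graded_coef T g j).
Proof.
move=> i ltT; rewrite /graded_coef; case: ifP => [leT|_]; last by rewrite hcomp0.
by rewrite (hcomp_homog _ (hcomp_hom _ _ _)) ifN //; apply/eqP; lia.
Qed.

Lemma graded_coef_idem T g j : graded_coef T (graded_coef T g) j = graded_coef T g j.
Proof.
rewrite /graded_coef; case: ifP => // leT.
by rewrite leT (hcomp_homog _ (hcomp_hom _ _ _)) eqxx.
Qed.

Lemma hcomp_comb k T (c : 'I_n -> R) :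
    (forall j : 'I_n, (j < k)%N -> deg_addn_le (e j) T (c j)) ->
  hcomp T (\sum_(j < n | (j < k)%N) c j * f j)
    = \sum_(j < n | (j < k)%N) graded_coef T c j * F j.
Proof.
move=> degc; rewrite hcomp_sum; apply: eq_bigr => j ltjk.
by rewrite (hcomp_mul_top (degc j ltjk) (@deg_f j)) /graded_coef -F_lead; case: ifP; rewrite ?mul0r.
Qed.

Lemma deg_le_comb k T (c : 'I_n -> R) :
    (forall j : 'I_n, (j < k)%N -> deg_addn_le (e j) T (c j)) ->
  deg_le T (\sum_(j < n | (j < k)%N) c j * f j).
Proof. by move=> degc; apply: deg_le_sum => j ltjk; apply: deg_le_mul (degc j ltjk) (@deg_f j). Qed.

Lemma homogeneous_comb k T z (g : 'I_n -> R) : z \in hom T ->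
    z = \sum_(j < n | (j < k)%N) g j * F j ->
  z = \sum_(j < n | (j < k)%N) graded_coef T g j * F j.
Proof.
move=> hz eq_z; rewrite -{1}[z](_ : hcomp T z = z); last by rewrite (hcomp_homog _ hz) eqxx.
rewrite {1}eq_z hcomp_sum; apply: eq_bigr => j _.
by rewrite (hcomp_mulr_hom _ _ (F_hom j)) /graded_coef; case: ifP; rewrite ?mul0r.
Qed.

Lemma lift_homogeneous k T z : z \in hom T -> in_ideal_upto k F z ->
  exists S, [/\ in_ideal_upto k f S, deg_le T S & hcomp T S = z].
Proof.
move=> hz [g eq_z]; have {}eq_z := homogeneous_comb hz eq_z.
exists (\sum_(j < n | (j < k)%N) graded_coef T g j * f j); split.
- exact: in_ideal_upto_sum.
- by apply: deg_le_comb => j _; apply: graded_coef_deg.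
rewrite hcomp_comb => [|j _]; last exact: graded_coef_deg.
by under eq_bigr => j _ do rewrite graded_coef_idem.
Qed.

Definition graded_repr k D x := exists2 c : 'I_n -> R,
  x = \sum_(j < n | (j < k)%N) c j * f j &
  forall j : 'I_n, (j < k)%N -> deg_addn_le (e j) D (c j).

Section LastGenerator.
Variables (k : nat) (ltkn : (k < n)%N).
Hypothesis graded_repr_k :
  forall x D, in_ideal_upto k f x -> deg_le D x -> graded_repr k D x.
Variables (x : R) (D : nat).
Hypothesis deg_x : deg_le D x.
Local Notation jk := (Ordinal ltkn).

Lemma graded_repr_extend y c : in_ideal_upto k f y -> x = y + c * f jk ->
  deg_addn_le (e jk) D c -> graded_repr k.+1 D x.
Proof.
move=> Iy eq_x degc.
have [c' eq_y degc'] : graded_repr k D y.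
  apply: graded_repr_k Iy _; rewrite (_ : y = x - c * f jk); last by rewrite eq_x addrK.
  exact: deg_leB deg_x (deg_le_mul degc (@deg_f jk)).
exists (fun j => if j == jk then c else c' j).
  rewrite sum_ltnS eqxx eq_x eq_y; congr (_ + _); apply: eq_bigr => j ltjk.
  by rewrite ifN // -(inj_eq val_inj) /= neq_ltn ltjk.
move=> j ltjk1; case: eqP => [-> // | ne_j]; apply: degc'.
have ne_jk : (j : nat) != k by apply: contra_not_neq ne_j => eq_jk; apply: val_inj.
by rewrite ltn_neqAle ne_jk -ltnS.
Qed.

Lemma reduce_last_coef m y c : in_ideal_upto k f y -> x = y + c * f jk ->
    deg_le m c -> (D < m + e jk)%N ->
  exists y' c', [/\ in_ideal_upto k f y', x = y' + c' * f jk, deg_le m c' & hcomp m c' = 0].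
Proof.
move=> Iy eq_x degc ltD; pose T := (m + e jk)%N.
have degc_T : deg_addn_le (e jk) T c := deg_le_addn (leqnn T) degc.
have eq_y : y = x - c * f jk by rewrite eq_x addrK.
have [c' eq_y' degc'] : graded_repr k T y.
  apply: graded_repr_k Iy _; rewrite eq_y.
  exact: deg_leB (deg_le_mono (ltnW ltD) deg_x) (deg_le_mul degc_T (@deg_f jk)).
have top_y : hcomp T y = - (hcomp m c * F jk).
  rewrite {1}eq_y hcompB (hcomp_mul_top degc_T (@deg_f jk)) deg_x //.
  by rewrite leq_addl addnK -F_lead sub0r.
have Ic : in_ideal_upto k F (hcomp m c).
  apply: (regular_F (i := jk)); rewrite -[_ * _]opprK -top_y eq_y' hcomp_comb //.
  exact/in_ideal_uptoN/in_ideal_upto_sum.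
have [S [IS degS topS]] := lift_homogeneous (hcomp_hom _ m c) Ic.
exists (y + S * f jk), (c - S); split.
- by rewrite mulrC; apply: in_ideal_uptoD Iy (in_ideal_uptoMl _ IS).
- by rewrite {1}eq_x; ring.
- exact: deg_leB degc degS.
- by rewrite hcompB topS subrr.
Qed.

Lemma graded_repr_last m y c : in_ideal_upto k f y -> x = y + c * f jk ->
  deg_le m c -> graded_repr k.+1 D x.
Proof.
elim/ltn_ind: m y c => m IH y c Iy eq_x degc.
case: (leqP (m + e jk) D) => [leD | ltD].
  exact: graded_repr_extend Iy eq_x (deg_le_addn leD degc).
have [y' [c' [Iy' eq_x' degc' topc']]] := reduce_last_coef Iy eq_x degc ltD.
case: (deg_le_pred degc' topc') => [c'0 | [m_gt0 degc'_pred]].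
  by apply: graded_repr_extend Iy' eq_x' _ => i _; rewrite c'0 hcomp0.
by apply: IH Iy' eq_x' degc'_pred; rewrite ltn_predL.
Qed.

End LastGenerator.

Lemma graded_repr_upto k : (k <= n)%N ->
  forall x D, in_ideal_upto k f x -> deg_le D x -> graded_repr k D x.
Proof.
elim: k => [_ | k IH ltkn] x D [c eq_x] degx.
  by exists c => // j; rewrite ltn0.
rewrite (sum_ltnS ltkn) in eq_x; have [m degc] := exists_deg_le Hgr (c (Ordinal ltkn)).
exact: (graded_repr_last (ltkn := ltkn) (IH (ltnW ltkn)) degx (in_ideal_upto_sum k f c) eq_x degc).
Qed.

Lemma hcomp_in_ideal x T : in_ideal f x -> deg_le T x -> in_ideal F (hcomp T x).
Proof.
move=> Ix degx; have [c eq_x degc] := graded_repr_upto (leqnn n) Ix degx.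
by rewrite eq_x hcomp_comb //; apply: in_ideal_upto_sum.
Qed.

Lemma reduce_leading a D : deg_le D a -> in_ideal F (hcomp D a) ->
  exists a', [/\ deg_le D a', hcomp D a' = 0 & in_ideal f (a - a')].
Proof.
move=> dega IFa; have [S [IS degS topS]] := lift_homogeneous (hcomp_hom _ D a) IFa.
exists (a - S); split; first exact: deg_leB.
  by rewrite hcompB topS subrr.
by rewrite opprB addrC subrK.
Qed.

Lemma in_ideal_f_prime_deg s a b Da Db : (Da + Db < s)%N ->
    deg_le Da a -> deg_le Db b -> in_ideal f (a * b) ->
  in_ideal f a \/ in_ideal f b.
Proof.
elim: s a b Da Db => [|s IH] a b Da Db; first by rewrite ltn0.
wlog IFa : a b Da Db / in_ideal F (hcomp Da a).
  move=> wlog_a lts dega degb Iab.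
  have degab : deg_addn_le Db (Da + Db) a := deg_le_addn (leqnn _) dega.
  have top_ab : hcomp (Da + Db) (a * b) = hcomp Da a * hcomp Db b.
    by rewrite (hcomp_mul_top degab degb) leq_addl addnK.
  have := hcomp_in_ideal Iab (deg_le_mul degab degb).
  rewrite top_ab => /prime_F [IFa | IFb]; first exact: wlog_a IFa lts dega degb Iab.
  rewrite mulrC addnC in Iab lts.
  by have [] := wlog_a b a Db Da IFb lts degb dega Iab; [right | left].
move=> lts dega degb Iab.
have [a' [dega' topa' Iaa']] := reduce_leading dega IFa.
have Ia'b : in_ideal f (a' * b).
  rewrite (_ : a' * b = a * b - b * (a - a')); last by ring.
  exact: in_ideal_uptoB Iab (in_ideal_uptoMl _ Iaa').
have eq_a : a = (a - a') + a' by rewrite subrK.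
case: (deg_le_pred dega' topa') => [a'0 | [Da_gt0 dega'_pred]].
  by left; move: Iaa'; rewrite a'0 subr0.
have [|Ia'|Ib] := IH a' b Da.-1 Db _ dega'_pred degb Ia'b; [lia | left | by right].
by rewrite eq_a; apply: in_ideal_uptoD.
Qed.

End LeadingForms.

Theorem mainTheorem14 (R : idomainType) (hom : nat -> pred R)
    (n : nat) (F f : 'I_n -> R) :
  is_Ngrading hom ->
  (forall i, homogeneous hom (F i)) ->
  regular_sequence F ->
  generates_prime_ideal F ->
  (forall i, leading_form hom (f i) (F i)) ->
  generates_prime_ideal f.
Proof.
move=> Hgr _ [regular_F _] [F_proper prime_F] lead_f.
have /fin_all_exists [e lead_e] :
    forall j, exists d, deg_le Hgr d (f j) /\ F j = hcomp Hgr d (f j).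
  by move=> j; apply: leading_formP.
have deg_f j := (lead_e j).1; have F_lead j := (lead_e j).2.
split.
  move=> If1; apply: F_proper; rewrite -(hcomp0_1 Hgr).
  exact: (hcomp_in_ideal deg_f F_lead regular_F If1 (deg_le0_1 Hgr)).
move=> a b Iab; have [[Da dega] [Db degb]] := (exists_deg_le Hgr a, exists_deg_le Hgr b).
exact: (in_ideal_f_prime_deg deg_f F_lead regular_F prime_F (ltnSn (Da + Db)) dega degb Iab).
Qed.
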